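(* Let $m \geq 4$ be an integer with $m \equiv 0 \pmod 4$, and let $(\boldsymbol{x}_n)_{0 \leq n < 2^m}$ be a $(0,m,2)$-net in base $2$ such that $\boldsymbol{x}_0 = \boldsymbol{\gamma} = (\gamma^{(1)},\gamma^{(2)})$, where \[ \gamma^{(1)} = \frac{1}{2^2} + \frac{1}{2^4}+ \cdots + \frac{1}{2^{m/2}}, \qquad \gamma^{(2)} = \frac{1}{2^{m/2+2}} + \frac{1}{2^{m/2+4}} + \cdots + \frac{1}{2^m}. \] Put $N = 2^m$. Then for the interval $J_{\boldsymbol{\gamma}} = [0,\gamma^{(1)}) \times [0,\gamma^{(2)})$ one has \[ \frac{1}{N} \Delta (\boldsymbol{\gamma},(\boldsymbol{x}_n)_{0 \leq n < 2^m}) \leq -\frac{1}{4} \cdot \frac{1}{2^{m+2}}\, m, \] and consequently \[ D^{*}((\boldsymbol{x}_n)_{0 \leq n < N}) \geq \frac{1}{16 \log 2} \frac{\log N}{N}. \]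
   Context: For integers $b \geq 2$, $s \geq 1$, $0 \leq t \leq m$, a $(t,m,s)$-net in base $b$ is a set (family) of $b^m$ points $\boldsymbol{x}_0,\dots,\boldsymbol{x}_{b^m-1}$ in $[0,1)^s$ such that every interval of the form $\prod_{i=1}^s [a_i b^{-d_i}, (a_i+1) b^{-d_i})$ with $d_i \in \mathbb{N}_0$, $a_i \in \{0,\dots,b^{d_i}-1\}$ and volume $b^{-m+t}$ contains exactly $b^t$ of the points. For a finite family of points $(\boldsymbol{x}_n)_{n}$ in $[0,1)^s$ and $\boldsymbol{y} = (y^{(1)},\dots,y^{(s)}) \in [0,1]^s$, the discrepancy function is $\Delta(\boldsymbol{y},(\boldsymbol{x}_n)_n) = \sum_{n} \big(\chi_{[\boldsymbol{0},\boldsymbol{y})}(\boldsymbol{x}_n) - y^{(1)}\cdots y^{(s)}\big)$, where $[\boldsymbol{0},\boldsymbol{y}) = [0,y^{(1)})\times\cdots\times[0,y^{(s)})$ and $\chi$ denotes the indicator function; the star-discrepancy of an $N$-point family is $D^*((\boldsymbol{x}_n)_n) = \sup_{\boldsymbol{y} \in [0,1)^s} \big| \frac{1}{N}\Delta(\boldsymbol{y},(\boldsymbol{x}_n)_n)\big|$. $\log$ denotes the natural logarithm. *)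

From HB Require Import structures.
From mathcomp Require Import all_boot all_order all_algebra.
From mathcomp Require Import all_classical all_reals all_analysis.
Unset Printing Implicit Defensive.
Import Order.TTheory GRing.Theory Num.Theory.
Local Open Scope ring_scope.

(* A point of [0,1)^s (or R^s) is a function 'I_s -> R.  A finite family of
   N points is a sequence x : nat -> ('I_s -> R), of which only the entries
   x 0, ..., x (N-1) are used. *)

Definition in_elem_interval {R : realType} (s b : nat) (d a : 'I_s -> nat)
    (p : 'I_s -> R) : bool :=
  [forall i, ((a i)%:R / (b ^ d i)%:R <= p i) && (p i < (a i).+1%:R / (b ^ d i)%:R)].

Definition is_tms_net {R : realType} (t m s b : nat) (x : nat -> 'I_s -> R) : Prop :=
  [/\ (2 <= b)%N, (1 <= s)%N, (t <= m)%N,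
      (forall n : nat, (n < b ^ m)%N -> forall i, 0 <= x n i < 1) &
      (forall d a : 'I_s -> nat, (\sum_(i < s) d i)%N = (m - t)%N ->
         (forall i, a i < b ^ d i)%N ->
         #|[pred n : 'I_(b ^ m) | @in_elem_interval R s b d a (x n)]| = (b ^ t)%N)].

Definition in_anchored_box {R : realType} (s : nat) (y p : 'I_s -> R) : bool :=
  [forall i, (0 <= p i) && (p i < y i)].

Definition discr_fun {R : realType} (s N : nat) (y : 'I_s -> R)
    (x : nat -> 'I_s -> R) : R :=
  \sum_(n < N) ((@in_anchored_box R s y (x n))%:R - \prod_(i < s) y i).

Definition star_discr {R : realType} (s N : nat) (x : nat -> 'I_s -> R) : R :=
  sup [set r : R | exists y : 'I_s -> R,
         (forall i, 0 <= y i < 1) /\ r = `| @discr_fun R s N y x / N%:R |].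

Definition gamma1 {R : realType} (m : nat) : R :=
  \sum_(1 <= k < (m %/ 4).+1) ((2 ^ (2 * k))%:R)^-1.
Definition gamma2 {R : realType} (m : nat) : R :=
  \sum_(1 <= k < (m %/ 4).+1) ((2 ^ (m %/ 2 + 2 * k))%:R)^-1.

Definition gammapt {R : realType} (m : nat) : 'I_2 -> R :=
  fun i => if i == ord0 then gamma1 m else gamma2 m.

From HB Require Import structures.
From mathcomp Require Import all_boot all_order all_algebra.
From mathcomp Require Import all_classical all_reals all_analysis.
From mathcomp Require Import unstable zify ring lra.
Import Order.TTheory GRing.Theory Num.Theory.
Local Open Scope ring_scope.

(* Write m = 4q and r_q = (4^q - 1)/3, whose binary expansion is 0101...01, so that
   gamma = (r_q / 4^q, r_q / 16^q).  A net point x_n in [0, gamma) first drops below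
   gamma^(1) at some binary digit 2(q - c) with c < q, where gamma^(1) has a 1.  Its
   second coordinate must then lie in one of the r_c elementary intervals of length
   2^-(2q+2c) to the left of the one containing gamma^(2): otherwise, as the next
   digit of gamma^(2) is 0, x_n would share with x_0 = gamma an elementary interval
   of volume 2^-m, which contains a single net point.  Hence [0, gamma) contains at
   most sum_(c<q) r_c = (r_q - q)/3 points, while N gamma^(1) gamma^(2) = r_q^2 / 4^q,
   and Delta(gamma) <= -q/4 = -m/16.  The bound on D^* follows from
   D^* >= |Delta(gamma)| / N. *)

Section Repunit4.
Local Open Scope nat_scope.

Fixpoint repunit4 (q : nat) : nat := if q is q'.+1 then 4 * repunit4 q' + 1 else 0.

Lemma repunit4_pow q : 3 * repunit4 q + 1 = 4 ^ q.
Proof. by elim: q => [|q IHq] //=; rewrite expnS -IHq; lia. Qed.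

Lemma repunit4_lt q : repunit4 q < 4 ^ q.
Proof. by rewrite -repunit4_pow; lia. Qed.

Lemma repunit4D e c : repunit4 (e + c) = 4 ^ e * repunit4 c + repunit4 e.
Proof. by elim: e => [|e IHe] /=; rewrite ?mul1n ?addn0 // IHe expnS; lia. Qed.

Lemma repunit4_divX e c : repunit4 (e + c) %/ 4 ^ e = repunit4 c.
Proof.
by rewrite repunit4D mulnC divnMDl ?expn_gt0 // divn_small ?addn0 ?repunit4_lt.
Qed.

Lemma repunit4_split q X :
  X < repunit4 q -> exists2 c, c < q & X %/ 4 ^ c = 4 * repunit4 (q - c.+1).
Proof.
elim: q X => [|q IHq] X //= ltX.
have [ltX4|geX4] := ltnP (X %/ 4) (repunit4 q).
  have [c ltcq eqX] := IHq _ ltX4.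
  by exists c.+1; rewrite // expnS divnMA eqX subSS.
exists 0 => //; rewrite expn0 divn1 subn1 /=.
have := leq_divM X 4; have := ltn_ceil X (isT : 0 < 4); lia.
Qed.

Lemma sum_repunit4 q : 3 * (\sum_(c < q) repunit4 c) + q = repunit4 q.
Proof.
elim: q => [|q IHq]; rewrite ?big_ord0 // big_ord_recr /=.
by move: IHq; set S := (\sum_(_ < q) _); lia.
Qed.

Lemma repunit4_le_mul_pow q : 0 < q -> 4 * repunit4 q <= q * 4 ^ q.
Proof.
case: q => [|[|q]] // _.
have : 2 * 4 ^ q.+2 <= q.+2 * 4 ^ q.+2 by rewrite leq_mul2r; lia.
have := repunit4_pow q.+2; lia.
Qed.

End Repunit4.

Lemma sum_repunit4_sub_sqr_le (R : realFieldType) q : (0 < q)%N ->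
  (\sum_(c < q) repunit4 c)%:R - (repunit4 q)%:R ^+ 2 / (4 ^ q)%:R <= - q%:R / 4 :> R.
Proof.
move=> q_gt0.
have sum_eq : 3 * (\sum_(c < q) repunit4 c)%:R + q%:R = (repunit4 q)%:R :> R.
  by rewrite -sum_repunit4 natrD natrM.
have pow_eq : 3 * (repunit4 q)%:R + 1 = (4 ^ q)%:R :> R.
  by rewrite -repunit4_pow natrD natrM.
have le_pow : 4 * (repunit4 q)%:R <= q%:R * (4 ^ q)%:R :> R.
  by rewrite -!natrM ler_nat repunit4_le_mul_pow.
move: sum_eq pow_eq le_pow; set C := (\sum_(_ < _) _)%:R; set G := (repunit4 q)%:R.
move=> sum_eq <- le_pow; have -> : C = (G - q%:R) / 3 by lra.
suff : (G - q%:R) / 3 + q%:R / 4 <= G ^+ 2 / (3 * G + 1) by lra.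
rewrite ler_pdivlMr ?ltr_wpDl ?mulr_ge0 ?ler0n //; nra.
Qed.

Section ElementaryIndex.
Context {R : realType}.

Definition elem_index (b d : nat) (z : R) : nat := Num.truncn (z * (b ^ d)%:R).

Lemma truncn_mul_divn (y : R) (k : nat) :
  (0 < k)%N -> 0 <= y -> (Num.truncn (y * k%:R) %/ k)%N = Num.truncn y.
Proof.
move=> k_gt0 y_ge0; have k_gt0R : 0 < k%:R :> R by rewrite ltr0n.
have /andP[lo hi] := truncn_itv (mulr_ge0 y_ge0 (ler0n R k)).
apply/esym/truncn_def; rewrite -(ler_pM2r k_gt0R) -(ltr_pM2r k_gt0R) -!natrM.
apply/andP; split; first by apply: le_trans lo; rewrite ler_nat leq_divM.
by apply: lt_le_trans hi _; rewrite ler_nat ltn_ceil.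
Qed.

Variables (b : nat) (b_gt0 : (0 < b)%N).

Let pow_gt0 d : 0 < (b ^ d)%:R :> R.
Proof. by rewrite ltr0n expn_gt0 b_gt0. Qed.

Lemma elem_index_coarsen d e z :
  0 <= z -> elem_index b d z = (elem_index b (d + e) z %/ b ^ e)%N.
Proof.
move=> z_ge0; rewrite /elem_index expnD natrM mulrA truncn_mul_divn //.
  by rewrite expn_gt0 b_gt0.
by rewrite mulr_ge0 ?ler0n.
Qed.

Lemma elem_index_leS d z : 0 <= z -> (b * elem_index b d z <= elem_index b d.+1 z)%N.
Proof. by move=> z_ge0; rewrite (elem_index_coarsen d 1) // addn1 expn1 mulnC leq_divM. Qed.

Lemma elem_index_le d : {homo elem_index b d : z z' / z <= z' >-> (z <= z')%N}.
Proof. by move=> z z' le_zz'; apply: le_truncn; rewrite ler_pM2r. Qed.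

Lemma elem_index_lt d z c :
  0 <= z -> z < c%:R / (b ^ d)%:R -> (elem_index b d z < c)%N.
Proof. by move=> z_ge0; rewrite ltr_pdivlMr // truncn_lt_nat ?mulr_ge0 ?ler0n. Qed.

Lemma elem_index_ltX d z : 0 <= z < 1 -> (elem_index b d z < b ^ d)%N.
Proof. by case/andP=> z_ge0 z_lt1; apply: elem_index_lt; rewrite // divff ?gt_eqF. Qed.

Lemma elem_index_natr d c : elem_index b d (c%:R / (b ^ d)%:R) = c.
Proof. by rewrite /elem_index mulfVK ?natrK ?gt_eqF. Qed.

Lemma elem_index_divX d e z : elem_index b (d + e) (z / (b ^ e)%:R) = elem_index b d z.
Proof. by rewrite /elem_index expnD natrM mulrA mulrAC mulfVK ?gt_eqF. Qed.

Lemma elem_index_ltVeqS d z g :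
  0 <= z <= g -> elem_index b d.+1 g = (b * elem_index b d g)%N ->
  (elem_index b d z < elem_index b d g)%N \/ elem_index b d.+1 z = elem_index b d.+1 g.
Proof.
case/andP=> z_ge0 le_zg eq_g.
have [lt_zg|ge_zg] := ltnP (elem_index b d z) (elem_index b d g); [by left | right].
have eq_zg : elem_index b d z = elem_index b d g.
  by apply/eqP; rewrite eqn_leq ge_zg elem_index_le.
by apply/eqP; rewrite eqn_leq elem_index_le // eq_g -eq_zg elem_index_leS.
Qed.

Lemma in_elem_intervalE s d a (p : 'I_s -> R) : (forall i, 0 <= p i) ->
  in_elem_interval s b d a p = [forall i, elem_index b (d i) (p i) == a i].
Proof.
move=> p_ge0; apply: eq_forallb => i.
by rewrite truncn_eq ?mulr_ge0 ?ler0n // ler_pdivrMr // ltr_pdivlMr.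
Qed.

End ElementaryIndex.

Lemma sumr_indicator (R : pzSemiRingType) (T : finType) (P : pred T) :
  \sum_(t : T) (P t)%:R = #|P|%:R :> R.
Proof.
rewrite -sumr_const [RHS]big_mkcond; apply: eq_bigr => t _.
by rewrite unfold_in; case: (P t).
Qed.

Section Nets.
Context {R : realType}.

Lemma tms0_net_index_inj {m s b} {x : nat -> 'I_s -> R} {d : 'I_s -> nat}
    {n n' : 'I_(b ^ m)} :
  is_tms_net 0 m s b x -> (\sum_(i < s) d i)%N = m ->
  (forall i, elem_index b (d i) (x n i) = elem_index b (d i) (x n' i)) -> n = n'.
Proof.
case=> b_ge2 _ _ x_unit net_card sum_d same_box.
have b_gt0 : (0 < b)%N by apply: leq_trans b_ge2.
pose a i := elem_index b (d i) (x n i).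
have box_le1 : (#|[pred k : 'I_(b ^ m) | in_elem_interval s b d a (x k)]| <= 1)%N.
  by rewrite net_card ?subn0 // => i; apply: elem_index_ltX; rewrite // x_unit.
have in_box (k : 'I_(b ^ m)) : (forall i, elem_index b (d i) (x k i) = a i) ->
    k \in [pred k : 'I_(b ^ m) | in_elem_interval s b d a (x k)].
  move=> eq_k; rewrite inE in_elem_intervalE // => [|i]; last first.
    by case/andP: (x_unit k (ltn_ord k) i).
  by apply/forallP => i; rewrite eq_k.
have /card_le1P/(_ n (in_box n (fun=> erefl)) n') := box_le1.
by rewrite in_box => [/esym/eqP | i]; rewrite -?same_box.
Qed.

Lemma tms0_net2_index_inj {m b} {x : nat -> 'I_2 -> R} {d1 d2} {n n' : 'I_(b ^ m)} :
  is_tms_net 0 m 2 b x -> (d1 + d2)%N = m ->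
  elem_index b d1 (x n ord0) = elem_index b d1 (x n' ord0) ->
  elem_index b d2 (x n ord_max) = elem_index b d2 (x n' ord_max) -> n = n'.
Proof.
move=> net sum_d same1 same2.
apply: (tms0_net_index_inj (d := fun i => if i == ord0 then d1 else d2) net).
  by rewrite big_ord_recl big_ord1.
move=> i; have [->|->] // : i = ord0 \/ i = ord_max.
by case: i => [[|[|//]] ?]; [left | right]; apply: val_inj.
Qed.

Lemma discr_fun_norm_le s N (y : 'I_s -> R) (x : nat -> 'I_s -> R) :
  (forall i, 0 <= y i <= 1) -> `|discr_fun s N y x| <= N%:R.
Proof.
move=> y_unit; have vol_ge0 : 0 <= \prod_(i < s) y i.
  by apply: prodr_ge0 => i _; case/andP: (y_unit i).
have vol_le1 : \prod_(i < s) y i <= 1 by apply: prodr_ile1 => i _; apply: y_unit.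
rewrite -[N in N%:R]card_ord -sumr_const.
apply: le_trans (ler_norm_sum _ _ _) (ler_sum _ _) => n _.
by rewrite ler_norml; case: in_anchored_box => /=; lra.
Qed.

Lemma star_discr_ge s N (y : 'I_s -> R) (x : nat -> 'I_s -> R) :
  (forall i, 0 <= y i < 1) -> `|discr_fun s N y x / N%:R| <= star_discr s N x.
Proof.
move=> y_unit; apply: sup_upper_bound; last by exists y.
split; first by exists `|discr_fun s N y x / N%:R|, y.
exists 1 => _ [y' [y'_unit ->]].
have y'_le1 i : 0 <= y' i <= 1 by case/andP: (y'_unit i) => -> /ltW.
rewrite normf_div normr_nat; have [->|N_gt0] := posnP N; first by rewrite invr0 mulr0.
by rewrite ler_pdivrMr ?ltr0n // mul1r discr_fun_norm_le.
Qed.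

End Nets.

Section Gamma.
Context {R : realType}.
Variable q : nat.

Lemma sum_inv_pow4 :
  \sum_(1 <= k < q.+1) ((2 ^ (2 * k))%:R : R)^-1 = (repunit4 q)%:R / (2 ^ (2 * q))%:R.
Proof.
elim: q => [|p IHp]; first by rewrite big_geq // mul0r.
rewrite big_nat_recr //= IHp mulnS !natrX exprD natrD natrM.
by field; rewrite expf_neq0 ?pnatr_eq0.
Qed.

Lemma gamma1E : gamma1 (4 * q) = (repunit4 q)%:R / (2 ^ (2 * q))%:R :> R.
Proof. by rewrite /gamma1 mulKn // sum_inv_pow4. Qed.

Lemma gamma2E : gamma2 (4 * q) = gamma1 (4 * q) / (2 ^ (2 * q))%:R :> R.
Proof.
rewrite /gamma2 mulKn // (_ : (4 * q) %/ 2 = 2 * q)%N; last lia.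
under eq_bigr do rewrite expnD natrM invfM.
by rewrite -mulr_sumr mulrC /gamma1 mulKn.
Qed.

Lemma gamma1_unit : 0 <= (gamma1 (4 * q) : R) < 1.
Proof.
rewrite gamma1E divr_ge0 ?ler0n //= ltr_pdivrMr // mul1r ltr_nat expnM.
exact: repunit4_lt.
Qed.

Lemma gamma2_unit : 0 <= (gamma2 (4 * q) : R) < 1.
Proof.
have /andP[g_ge0 g_lt1] := gamma1_unit.
rewrite gamma2E divr_ge0 ?ler0n //= ltr_pdivrMr // mul1r.
by apply: lt_le_trans g_lt1 _; rewrite ler1n expn_gt0.
Qed.

Lemma gammapt_unit i : 0 <= (gammapt (4 * q) i : R) < 1.
Proof. by rewrite /gammapt; case: eqP => _; [exact: gamma1_unit | exact: gamma2_unit]. Qed.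

Lemma gamma1_index_even c :
  (c <= q)%N -> elem_index 2 (2 * c) (gamma1 (4 * q) : R) = repunit4 c.
Proof.
move=> le_cq; have /andP[g_ge0 _] := gamma1_unit.
rewrite (elem_index_coarsen 2 isT _ (2 * (q - c))) // -mulnDr subnKC //.
rewrite gamma1E elem_index_natr // expnM.
have -> : repunit4 q = repunit4 (q - c + c) by rewrite subnK.
exact: repunit4_divX.
Qed.

Lemma gamma1_index_odd c :
  (c < q)%N -> elem_index 2 (2 * c).+1 (gamma1 (4 * q) : R) = (2 * repunit4 c)%N.
Proof.
move=> lt_cq; have /andP[g_ge0 _] := gamma1_unit.
rewrite (elem_index_coarsen 2 isT _ 1) // addn1 (_ : (2 * c).+2 = 2 * c.+1)%N; last lia.
by rewrite gamma1_index_even //= expn1; lia.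
Qed.

Lemma gamma2_index l :
  elem_index 2 (2 * q + l) (gamma2 (4 * q) : R) = elem_index 2 l (gamma1 (4 * q) : R).
Proof. by rewrite gamma2E addnC elem_index_divX. Qed.

Lemma gamma1_first_gap (z : R) : 0 <= z < gamma1 (4 * q) ->
  exists2 c, (c < q)%N & elem_index 2 (2 * (q - c)) z = (4 * repunit4 (q - c.+1))%N.
Proof.
case/andP=> z_ge0; rewrite gamma1E => /(elem_index_lt 2 isT _ _ _ z_ge0).
case/repunit4_split=> c lt_cq eq_c; exists c => //.
rewrite (elem_index_coarsen 2 isT _ (2 * c)) // -mulnDr (subnK (ltnW lt_cq)) expnM.
exact: eq_c.
Qed.

Lemma discr_gammaE (x : nat -> 'I_2 -> R) :
  discr_fun 2 (2 ^ (4 * q)) (gammapt (4 * q)) x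
    = #|[pred n : 'I_(2 ^ (4 * q)) | in_anchored_box 2 (gammapt (4 * q)) (x n)]|%:R
      - (repunit4 q)%:R ^+ 2 / (2 ^ (2 * q))%:R.
Proof.
have vol : \prod_(i < 2) gammapt (4 * q) i = gamma1 (4 * q) * gamma2 (4 * q) :> R.
  by rewrite big_ord_recl big_ord1.
have N_eq : (2 ^ (4 * q))%:R = (2 ^ (2 * q))%:R * (2 ^ (2 * q))%:R :> R.
  by rewrite -natrM -expnD (_ : 2 * q + 2 * q = 4 * q)%N //; lia.
rewrite /discr_fun sumrB sumr_indicator sumr_const card_ord vol -[_ *+ 2 ^ _]mulr_natr N_eq.
by rewrite gamma2E gamma1E; field; rewrite gt_eqF.
Qed.

Section NetThroughGamma.
Variable x : nat -> 'I_2 -> R.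
Hypotheses (net : is_tms_net 0 (4 * q) 2 2 x) (x0 : x 0%N = gammapt (4 * q)).

Lemma gamma_box_cover (n : 'I_(2 ^ (4 * q))) :
  in_anchored_box 2 (gammapt (4 * q)) (x n) ->
  exists2 c, (c < q)%N &
    elem_index 2 (2 * (q - c)) (x n ord0) = (4 * repunit4 (q - c.+1))%N /\
    (elem_index 2 (2 * q + 2 * c) (x n ord_max) < repunit4 c)%N.
Proof.
move=> /forallP in_box; have box1 := in_box ord0; have box2 := in_box ord_max.
rewrite /gammapt /= in box1 box2.
have [c lt_cq eq_c] := gamma1_first_gap _ box1; exists c => //; split => //.
have x2_box : 0 <= x n ord_max <= gamma2 (4 * q) by case/andP: box2 => -> /ltW.
have digit0 : elem_index 2 (2 * q + 2 * c).+1 (gamma2 (4 * q) : R)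
    = (2 * elem_index 2 (2 * q + 2 * c) (gamma2 (4 * q) : R))%N.
  by rewrite -addnS !gamma2_index gamma1_index_odd // (gamma1_index_even _ (ltnW lt_cq)).
have [|agree2] := elem_index_ltVeqS 2 isT _ _ _ x2_box digit0.
  by rewrite gamma2_index (gamma1_index_even _ (ltnW lt_cq)).
have N_gt0 : (0 < 2 ^ (4 * q))%N by rewrite expn_gt0.
pose origin : 'I_(2 ^ (4 * q)) := Ordinal N_gt0.
have x_origin : x origin = gammapt (4 * q) := x0.
have agree1 : elem_index 2 (2 * (q - c.+1)).+1 (x n ord0)
    = elem_index 2 (2 * (q - c.+1)).+1 (x origin ord0).
  have /andP[x1_ge0 _] := box1.
  rewrite x_origin /gammapt /= gamma1_index_odd; last lia.
  rewrite (elem_index_coarsen 2 isT _ 1) // addn1.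
  rewrite (_ : (2 * (q - c.+1)).+2 = 2 * (q - c))%N; last lia.
  by rewrite eq_c expn1; lia.
rewrite -[gamma2 _]/(gammapt (4 * q) ord_max) -x_origin in agree2.
have n_origin : n = origin by apply: (tms0_net2_index_inj net _ agree1 agree2); lia.
by move: box1; rewrite n_origin x_origin /gammapt /= ltxx andbF.
Qed.

Lemma card_gamma_box_le :
  (#|[pred n : 'I_(2 ^ (4 * q)) | in_anchored_box 2 (gammapt (4 * q)) (x n)]|
     <= \sum_(c < q) repunit4 c)%N.
Proof.
pose B (c k : nat) := [set n : 'I_(2 ^ (4 * q)) |
  (elem_index 2 (2 * (q - c)) (x n ord0) == 4 * repunit4 (q - c.+1))%N &&
  (elem_index 2 (2 * q + 2 * c) (x n ord_max) == k)].
have B_le1 (c : 'I_q) k : (#|B c k| <= 1)%N.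
  apply/card_le1P => n; rewrite inE => /andP[/eqP n1 /eqP n2] n'.
  rewrite inE; apply/idP/eqP => [/andP[/eqP n1' /eqP n2'] | ->]; last by rewrite n1 n2 !eqxx.
  have le_cq := ltn_ord c.
  by apply: (tms0_net2_index_inj net _ (etrans n1' (esym n1)) (etrans n2' (esym n2))); lia.
have cover : [pred n : 'I_(2 ^ (4 * q)) | in_anchored_box 2 (gammapt (4 * q)) (x n)]
    \subset \bigcup_(c < q) \bigcup_(k < repunit4 c) B c k.
  apply/fintype.subsetP => n; rewrite inE => /gamma_box_cover[c lt_cq [n1 n2]].
  apply/bigcupP; exists (Ordinal lt_cq) => //; apply/bigcupP; exists (Ordinal n2) => //.
  by rewrite inE n1 !eqxx.
apply: (leq_trans (subset_leq_card cover)).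
apply: leq_trans; first exact: card_big_setU.
apply: leq_sum => c _ /=.
apply: leq_trans; first exact: card_big_setU.
apply: leq_trans (_ : _ <= \sum_(k < repunit4 c) 1)%N _; first exact: leq_sum.
by rewrite big_const_ord iter_addn_0 mul1n.
Qed.

Lemma discr_gamma_le : (0 < q)%N ->
  discr_fun 2 (2 ^ (4 * q)) (gammapt (4 * q)) x <= - q%:R / 4.
Proof.
move=> q_gt0; rewrite discr_gammaE (_ : 2 ^ (2 * q) = 4 ^ q)%N; last by rewrite expnM.
apply: le_trans _ (sum_repunit4_sub_sqr_le _ _ q_gt0); rewrite lerD2r ler_nat.
exact: card_gamma_box_le.
Qed.

End NetThroughGamma.
End Gamma.

Theorem theorem3 (R : realType) (m : nat) (x : nat -> 'I_2 -> R) :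
  (4 <= m)%N -> (4 %| m)%N ->
  @is_tms_net R 0 m 2 2 x ->
  x 0%N = gammapt m ->
  @discr_fun R 2 (2 ^ m) (gammapt m) x / (2 ^ m)%:R
    <= - (1 / 4) * ((2 ^ (m + 2))%:R)^-1 * m%:R
  /\ @star_discr R 2 (2 ^ m) x
    >= (16 * ln (2 : R))^-1 * (ln ((2 ^ m)%:R : R) / (2 ^ m)%:R).
Proof.
move=> m_ge4 /dvdnP[q m_eq] net x0; subst m; rewrite mulnC in net x0 *.
have q_gt0 : (0 < q)%N by lia.
have discr_le := discr_gamma_le _ _ net x0 q_gt0.
set N := (2 ^ (4 * q))%:R; have N_gt0 : 0 < N :> R by rewrite ltr0n expn_gt0.
have ln_N : ln N = (4 * q)%:R * ln 2 :> R by rewrite /N natrX lnXn // mulr_natl.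
have ln2_gt0 : 0 < ln (2 : R) by rewrite ln_gt0 // ltr1n.
split.
  rewrite expnD natrM -/N (_ : _ * (4 * q)%:R = - q%:R / 4 / N); last first.
    by rewrite natrM; field; rewrite gt_eqF.
  by rewrite ler_pM2r ?invr_gt0.
rewrite ln_N (_ : _ * _ = q%:R / 4 / N); last by rewrite natrM; field; rewrite !gt_eqF.
apply: le_trans (star_discr_ge _ _ _ x (gammapt_unit q)).
rewrite normf_div normr_nat ler_pM2r ?invr_gt0 //.
by rewrite -normrN; apply: le_trans _ (ler_norm _); lra.
Qed.
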